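(* Let Assumption 1 (stated in the context) hold for the system operator $\mathbf{F}$. Consider the closed-loop system $$\mathbf{x}=\mathbf{F}(\mathbf{x},\mathbf{u})+\mathbf{w},\qquad \mathbf{u}=\mathcal{R}(\widehat{\mathbf{w}}),\quad \widehat{\mathbf{w}}=\mathbf{x}-\mathbf{F}(\mathbf{x},\mathbf{u}),$$ where the causal controller operator $\mathcal{R}:\widehat{\mathbf{w}}\mapsto\mathbf{u}$ is obtained by interconnecting $N$ sub-operators $\mathcal{R}^{[i]}$ (each with finite $\mathcal{L}_2$-gain at most $\gamma^{[i]}>0$ in the dissipativity sense described in the context) according to $$\begin{bmatrix} v\\ u\end{bmatrix}=\begin{bmatrix} M_{vz} & M_{vw}\\ M_{uz} & 0_{m\times n}\end{bmatrix}\begin{bmatrix} z\\ \widehat{w}\end{bmatrix}$$ at every time $t$ (the interconnection being assumed well posed, i.e. it defines a unique causal operator $\mathcal{R}$). Fix $\gamma_R>0$ and let $S=\mathrm{blkdiag}(\gamma_R^2 I_n,\,-I_m)$. If there exist scalars $\alpha^{[i]}\ge 0$, $i=1,\dots,N$, such that $$\begin{bmatrix} M_{vz} & M_{vw}\\ I & 0\\ 0 & I\\ M_{uz} & 0\end{bmatrix}^{\top}\begin{bmatrix}\mathbf{X}(\alpha^{[i]}X^{[i]}) & 0\\ 0 & -S\end{bmatrix}\begin{bmatrix} M_{vz} & M_{vw}\\ I & 0\\ 0 & I\\ M_{uz} & 0\end{bmatrix}\preceq 0,$$ then the closed-loop system is $\mathcal{L}_2$-stable, i.e. the closed-loop maps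 $\mathbf{w}\mapsto\mathbf{x}$ and $\mathbf{w}\mapsto\mathbf{u}$ both belong to $\mathcal{L}_2$ (and $\mathcal{R}\in\mathcal{L}_2$).
   Context: Sequences: $l^n$ is the set of sequences $\mathbf{v}=(v_0,v_1,\dots)$ with $v_t\in\mathbb{R}^n$; $l_2^n\subset l^n$ those with $\sum_t|v_t|^2<\infty$. An operator $\mathbf{A}:l^n\to l^m$ is causal if its output at time $t$ depends only on inputs up to time $t$, and strictly causal if it depends only on inputs up to time $t-1$. $\mathbf{A}$ is $\mathcal{L}_2$-stable (written $\mathbf{A}\in\mathcal{L}_2$) if it is causal and maps $l_2^n$ into $l_2^m$. System: $x_t=f(x_{t-1},u_{t-1})+w_t$ for $t\ge1$, $w_0=x_0$, with $x_t,w_t\in\mathbb{R}^n$, $u_t\in\mathbb{R}^m$; in operator form $\mathbf{x}=\mathbf{F}(\mathbf{x},\mathbf{u})+\mathbf{w}$ with $\mathbf{F}$ strictly causal, $\mathbf{F}(\mathbf{x},\mathbf{u})=(0,f(x_0,u_0),f(x_1,u_1),\dots)$. The state is $x=\mathrm{col}(x^{[1]},\dots,x^{[N]})$ and similarly for $u,w$, with subsystem $i$ depending only on its graph neighbours. Assumption 1: the map $(\mathbf{w},\mathbf{u})\mapsto\mathbf{x}$ defined by the system lies in $\mathcal{L}_2$, and $\mathbf{w}\in l_2^n$. Sub-operators: for $i=1,\dots,N$, $\mathcal{R}^{[i]}:l^{q_i}\to l^{r_i}$ has state-space form $\xi^{[i]}_{t+1}=\rho^{[i]}(\xi^{[i]}_t,v^{[i]}_t)$,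 $z^{[i]}_t=\chi^{[i]}(\xi^{[i]}_t,v^{[i]}_t)$, with fixed initial internal state, and has $\mathcal{L}_2$-gain at most $\gamma^{[i]}$ in the sense that there is a nonnegative storage function $V^{[i]}$ with $V^{[i]}(\xi^{[i]}_{t+1})-V^{[i]}(\xi^{[i]}_t)\le s^{[i]}(v^{[i]}_t,z^{[i]}_t)$ for all $t$, where $s^{[i]}(v,z)=[v;z]^\top X^{[i]}[v;z]$ and $X^{[i]}=\mathrm{blkdiag}(\gamma^{[i]2}I_{q_i},-I_{r_i})$. Stacked: $v=\mathrm{col}(v^{[i]})\in\mathbb{R}^q$, $z=\mathrm{col}(z^{[i]})\in\mathbb{R}^r$, $q=\sum q_i$, $r=\sum r_i$; $M_{vz}\in\mathbb{R}^{q\times r}$, $M_{vw}\in\mathbb{R}^{q\times n}$, $M_{uz}\in\mathbb{R}^{m\times r}$. $\mathbf{X}(\alpha^{[i]}X^{[i]})$ denotes the quadratic-form matrix in the variables $(v,z)$ of $\sum_i\alpha^{[i]}s^{[i]}(v^{[i]},z^{[i]})$, namely $\mathbf{X}(\alpha^{[i]}X^{[i]})=\mathrm{blkdiag}(\Pi_{N,v},-\Pi_{N,z})$ with $\Pi_{N,v}=\mathrm{blkdiag}(\alpha^{[1]}\gamma^{[1]2}I_{q_1},\dots,\alpha^{[N]}\gamma^{[N]2}I_{q_N})$ and $\Pi_{N,z}=\mathrm{blkdiag}(\alpha^{[1]}I_{r_1},\dots,\alpha^{[N]}I_{r_N})$. *)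

From HB Require Import structures.
From mathcomp Require Import all_boot all_order all_algebra.
From mathcomp Require Import all_classical all_reals all_analysis.
Set Implicit Arguments. Unset Strict Implicit. Unset Printing Implicit Defensive.
Import Order.TTheory GRing.Theory Num.Theory.
Import numFieldNormedType.Exports.
Local Open Scope ring_scope.

Section Defs.
Variable R : realType.

Definition seqv (k : nat) := nat -> 'cV[R]_k.

Definition sqn (k : nat) (v : 'cV[R]_k) : R := (v^T *m v) 0 0.

Definition l2 (k : nat) (v : seqv k) : Prop := cvgn (series (fun t => sqn (v t))).

Definition causal (k l : nat) (A : seqv k -> seqv l) : Prop :=
  forall a b t, (forall s, (s <= t)%N -> a s = b s) -> A a t = A b t.

Definition L2stable (k l : nat) (A : seqv k -> seqv l) : Prop :=
  causal A /\ forall a, l2 a -> l2 (A a).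

Definition causal2 (k1 k2 l : nat) (A : seqv k1 -> seqv k2 -> seqv l) : Prop :=
  forall a b a' b' t, (forall s, (s <= t)%N -> a s = a' s /\ b s = b' s) ->
    A a b t = A a' b' t.

Definition L2stable2 (k1 k2 l : nat) (A : seqv k1 -> seqv k2 -> seqv l) : Prop :=
  causal2 A /\ forall a b, l2 a -> l2 b -> l2 (A a b).

Definition Fop (n m : nat) (f : 'cV[R]_n -> 'cV[R]_m -> 'cV[R]_n)
  (x : seqv n) (u : seqv m) : seqv n :=
  fun t => match t with 0%N => 0 | t'.+1 => f (x t') (u t') end.

Fixpoint sys_x (n m : nat) (f : 'cV[R]_n -> 'cV[R]_m -> 'cV[R]_n)
  (w : seqv n) (u : seqv m) (t : nat) : 'cV[R]_n :=
  match t with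
  | 0%N => w 0%N
  | t'.+1 => f (sys_x f w u t') (u t') + w t
  end.

Definition closed_loop (n m : nat) (f : 'cV[R]_n -> 'cV[R]_m -> 'cV[R]_n)
  (Rop : seqv n -> seqv m) (w : seqv n) (x : seqv n) (u : seqv m) : Prop :=
  (forall t, x t = Fop f x u t + w t) /\
  u = Rop (fun t => x t - Fop f x u t).

(* internal-state trajectory of a state-space sub-operator
   xi_{t+1} = rho(xi_t, v_t), xi_0 fixed *)
Fixpoint traj (X : Type) (q : nat) (rho : X -> 'cV[R]_q -> X) (xi0 : X)
  (v : seqv q) (t : nat) : X :=
  match t with
  | 0%N => xi0
  | t'.+1 => rho (traj rho xi0 v t') (v t')
  end.

Definition Xgain (q r : nat) (gam : R) : 'M[R]_(q + r) :=
  block_mx (gam ^+ 2)%:M 0 0 (- 1%:M).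

Definition supply (q r : nat) (gam : R) (v : 'cV[R]_q) (z : 'cV[R]_r) : R :=
  ((col_mx v z)^T *m Xgain q r gam *m col_mx v z) 0 0.

Definition nsd (k : nat) (A : 'M[R]_k) : Prop :=
  forall x : 'cV[R]_k, (x^T *m A *m x) 0 0 <= 0.

Section Interconnection.
Variables (N n m : nat) (q r : 'I_N -> nat).
Variables (Xi : 'I_N -> Type)
  (rho : forall i, Xi i -> 'cV[R]_(q i) -> Xi i)
  (chi : forall i, Xi i -> 'cV[R]_(q i) -> 'cV[R]_(r i))
  (xi0 : forall i, Xi i).
Variables (Mvz : 'M[R]_(\sum_i q i, \sum_i r i)) (Mvw : 'M[R]_(\sum_i q i, n))
  (Muz : 'M[R]_(m, \sum_i r i)).

Definition vblk (v : seqv (\sum_i q i)) (i : 'I_N) : seqv (q i) :=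
  fun t => submxcol (v t) i.

Definition zout (v : seqv (\sum_i q i)) : seqv (\sum_i r i) :=
  fun t => \mxcol_(i < N) @chi i (traj (@rho i) (xi0 i) (vblk v i) t) (vblk v i t).

Definition ctrl_eq (what : seqv n) (v : seqv (\sum_i q i)) : Prop :=
  forall t, v t = Mvz *m zout v t + Mvw *m what t.

Definition ctrl_out (v : seqv (\sum_i q i)) : seqv m :=
  fun t => Muz *m zout v t.

End Interconnection.

(* X(alpha^{[i]} X^{[i]}) = blkdiag(Pi_{N,v}, -Pi_{N,z}) *)
Definition Xalpha (N : nat) (q r : 'I_N -> nat) (alpha gam : 'I_N -> R)
  : 'M[R]_((\sum_i q i) + (\sum_i r i)) :=
  block_mx (\mxdiag_(i < N) (alpha i * gam i ^+ 2)%:M : 'M[R]_(\sum_i q i)) 0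
           0 (- (\mxdiag_(i < N) (alpha i)%:M : 'M[R]_(\sum_i r i))).

Definition Smat (n m : nat) (gR : R) : 'M[R]_(n + m) :=
  block_mx (gR ^+ 2)%:M 0 0 (- 1%:M).

Definition Mouter (N n m : nat) (q r : 'I_N -> nat)
  (Mvz : 'M[R]_(\sum_i q i, \sum_i r i)) (Mvw : 'M[R]_(\sum_i q i, n))
  (Muz : 'M[R]_(m, \sum_i r i))
  : 'M[R]_(((\sum_i q i) + (\sum_i r i)) + (n + m), (\sum_i r i) + n) :=
  col_mx (col_mx (row_mx Mvz Mvw) (row_mx 1%:M 0))
         (col_mx (row_mx 0 1%:M) (row_mx Muz 0)).

Definition LMI (N n m : nat) (q r : 'I_N -> nat) (alpha gam : 'I_N -> R) (gR : R)
  Mvz Mvw Muz : Prop :=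
  nsd ((Mouter Mvz Mvw Muz)^T
       *m block_mx (Xalpha q r alpha gam) 0 0 (- Smat n m gR)
       *m Mouter (N:=N) (n:=n) (m:=m) (q:=q) (r:=r) Mvz Mvw Muz).

End Defs.

(** Each sub-operator dissipates the supply [gam_i^2 |v_i|^2 - |z_i|^2], so the
    weighted sum of supplies, summed over time, is bounded below by minus the
    weighted initial storages.  Evaluated on the stacked vector [(z_t, what_t)],
    the LMI says [|u_t|^2 <= gR^2 |what_t|^2 - sum_i alpha_i s_i(t)]; summing over
    time bounds the energy of [u] by [gR^2] times that of [what] plus a constant,
    so the controller is L2-stable.  In closed loop [what = w], hence [u = R w] and
    [x = sys_x f w (R w)], which is L2-stable by Assumption 1. *)

From HB Require Import structures.
From mathcomp Require Import all_boot all_order all_algebra.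
From mathcomp Require Import all_classical all_reals all_analysis.
From mathcomp Require Import lra.
Import Order.TTheory GRing.Theory Num.Theory.
Import numFieldNormedType.Exports.
Set Implicit Arguments. Unset Strict Implicit.
Local Open Scope ring_scope.

Definition qform (R : comPzRingType) (k : nat) (x : 'cV[R]_k) (A : 'M[R]_k) : R :=
  (x^T *m A *m x) 0 0.

Lemma qform_block (R : comPzRingType) k l (a : 'cV[R]_k) (b : 'cV[R]_l) A D :
  qform (col_mx a b) (block_mx A 0 0 D) = qform a A + qform b D.
Proof.
rewrite /qform tr_col_mx mul_row_block !mulmx0 addr0 add0r mul_row_col.
by rewrite [LHS]mxE.
Qed.

Lemma qformN (R : comPzRingType) k (x : 'cV[R]_k) A : qform x (- A) = - qform x A.
Proof. by rewrite /qform mulmxN mulNmx mxE. Qed.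

Lemma qform_congr (R : comPzRingType) k l (M : 'M[R]_(k, l)) B (y : 'cV[R]_l) :
  qform y (M^T *m B *m M) = qform (M *m y) B.
Proof. by rewrite /qform trmx_mul !mulmxA. Qed.

Lemma qform_mxdiag (R : comPzRingType) N (p : 'I_N -> nat)
    (a : forall i, 'cV[R]_(p i)) (D : forall i, 'M[R]_(p i)) :
  qform (\mxcol_i a i) (\mxdiag_i D i) = \sum_i qform (a i) (D i).
Proof.
rewrite /qform tr_mxcol -mulmxA mul_mxdiag_mxcol mul_mxrow_mxcol summxE.
by apply: eq_bigr => i _; rewrite mulmxA.
Qed.

Lemma qform_scalar (R : realType) k (x : 'cV[R]_k) c : qform x c%:M = c * sqn x.
Proof. by rewrite /qform /sqn mul_mx_scalar -scalemxAl mxE. Qed.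

Lemma sqn_ge0 (R : realType) k (x : 'cV[R]_k) : 0 <= sqn x.
Proof.
by rewrite /sqn mxE; apply: sumr_ge0 => j _; rewrite mxE -expr2 sqr_ge0.
Qed.

Lemma supplyE (R : realType) q r (g : R) (a : 'cV_q) (b : 'cV_r) :
  supply g a b = g ^+ 2 * sqn a - sqn b.
Proof.
by rewrite /supply -/(qform _ _) qform_block qformN !qform_scalar mul1r.
Qed.

Section EnergySeries.
Variables (R : realType) (k : nat).
Implicit Types x : seqv R k.

Lemma nondecreasing_energy x :
  {homo series (fun t => sqn (x t)) : a b / (a <= b)%N >-> a <= b}.
Proof.
move=> a b hab; rewrite !seriesEnat /= (big_cat_nat (leq0n a) hab) /= lerDl.
by apply: sumr_ge0 => t _; exact: sqn_ge0.
Qed.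

Lemma l2_bounded_energy x (C : R) :
  (forall T, \sum_(0 <= t < T) sqn (x t) <= C) -> l2 x.
Proof.
move=> bound; apply: nondecreasing_is_cvgn; first exact: nondecreasing_energy.
by exists C => _ [T _ <-]; rewrite seriesEnat; exact: bound.
Qed.

Lemma energy_le_l2 x T :
  l2 x -> \sum_(0 <= t < T) sqn (x t) <= limn (series (fun t => sqn (x t))).
Proof.
by move=> x_l2; have := nondecreasing_cvgn_le (nondecreasing_energy x) x_l2 T;
  rewrite seriesEnat.
Qed.

End EnergySeries.

Lemma dissipation_sum (R : numDomainType) (X : Type) (V : X -> R)
    (xi : nat -> X) (s : nat -> R) :
  (forall t, V (xi t.+1) - V (xi t) <= s t) ->
  forall T, V (xi T) - V (xi 0%N) <= \sum_(0 <= t < T) s t.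
Proof.
move=> diss; elim=> [|T IH]; first by rewrite big_geq // subrr.
rewrite big_nat_recr //=; have := lerD IH (diss T).
by rewrite [X in X <= _]addrC subrKA.
Qed.

Section Controller.
Variables (R : realType) (N n m : nat) (q r : 'I_N -> nat).
Variables (Xi : 'I_N -> Type)
  (rho : forall i, Xi i -> 'cV[R]_(q i) -> Xi i)
  (chi : forall i, Xi i -> 'cV[R]_(q i) -> 'cV[R]_(r i))
  (xi0 : forall i, Xi i).
Variables (gam : 'I_N -> R) (V : forall i, Xi i -> R).
Variables (Mvz : 'M[R]_(\sum_i q i, \sum_i r i)) (Mvw : 'M[R]_(\sum_i q i, n))
  (Muz : 'M[R]_(m, \sum_i r i)).
Variables (gR : R) (alpha : 'I_N -> R).

Hypothesis V_ge0 : forall i (xi : Xi i), 0 <= V xi.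
Hypothesis dissipative : forall i (vi : seqv R (q i)) (t : nat),
  V (traj (@rho i) (xi0 i) vi t.+1) - V (traj (@rho i) (xi0 i) vi t)
  <= supply (gam i) (vi t) (@chi i (traj (@rho i) (xi0 i) vi t) (vi t)).
Hypothesis alpha_ge0 : forall i, 0 <= alpha i.
Hypothesis lmi : LMI alpha gam gR Mvz Mvw Muz.

Definition blk_supply (v : seqv R (\sum_i q i)) i t :=
  supply (gam i) (vblk v i t)
    (@chi i (traj (@rho i) (xi0 i) (vblk v i) t) (vblk v i t)).

Lemma ctrl_out_sqn_le what v t :
  ctrl_eq rho chi xi0 Mvz Mvw what v ->
  sqn (ctrl_out rho chi xi0 Muz v t) <= gR ^+ 2 * sqn (what t) - \sum_i alpha i * blk_supply v i t.
Proof.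
move=> Hv; have := lmi (col_mx (zout rho chi xi0 v t) (what t)).
rewrite -/(qform _ _) qform_congr /Mouter !mul_col_mx !mul_row_col.
rewrite !mul1mx !mul0mx addr0 add0r -(Hv t).
rewrite qform_block /Xalpha qform_block qformN /Smat opp_block_mx !oppr0 opprK.
rewrite qform_block qformN !qform_scalar mul1r.
rewrite -[v t]submxcolK !qform_mxdiag -sumrB.
rewrite (eq_bigr (fun i => alpha i * blk_supply v i t)); last first.
  by move=> i _; rewrite !qform_scalar /blk_supply supplyE mulrBr expr2 !mulrA.
rewrite addr0 /ctrl_out; lra.
Qed.

Lemma ctrl_energy_le what v T :
  ctrl_eq rho chi xi0 Mvz Mvw what v ->
  \sum_(0 <= t < T) sqn (ctrl_out rho chi xi0 Muz v t)
  <= gR ^+ 2 * \sum_(0 <= t < T) sqn (what t) + \sum_i alpha i * V (xi0 i).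
Proof.
move=> Hv; apply: le_trans (ler_sum _ (fun t _ => ctrl_out_sqn_le t Hv)) _.
rewrite sumrB -mulr_sumr exchange_big /= lerD2l -sumrN.
apply: ler_sum => i _; rewrite -mulr_sumr -mulrN ler_wpM2l // lerNl.
apply: le_trans (dissipation_sum (dissipative (vblk v i)) T).
by rewrite /= lerDr V_ge0.
Qed.

Lemma ctrl_L2stable (Rop : seqv R n -> seqv R m) :
  (forall what, exists v, ctrl_eq rho chi xi0 Mvz Mvw what v) ->
  (forall what v, ctrl_eq rho chi xi0 Mvz Mvw what v ->
     Rop what = ctrl_out rho chi xi0 Muz v) ->
  causal Rop -> L2stable Rop.
Proof.
move=> ex_v Rop_out Rop_causal; split => // what what_l2.
have [v Hv] := ex_v what; rewrite (Rop_out _ _ Hv).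
apply: (@l2_bounded_energy _ _ _
  (gR ^+ 2 * limn (series (fun t => sqn (what t))) + \sum_i alpha i * V (xi0 i))).
move=> T; apply: le_trans (ctrl_energy_le T Hv) _.
by rewrite lerD2r ler_wpM2l ?sqr_ge0 ?energy_le_l2.
Qed.

End Controller.

Lemma L2stable2_comp (R : realType) k l p (A : seqv R k -> seqv R l -> seqv R p)
    (B : seqv R k -> seqv R l) :
  L2stable2 A -> L2stable B -> L2stable (fun w => A w (B w)).
Proof.
move=> [A_causal A_l2] [B_causal B_l2]; split; last first.
  by move=> w w_l2; apply: A_l2 => //; exact: B_l2.
move=> a b t eq_ab; apply: A_causal => s le_st; split; first exact: eq_ab.
by apply: B_causal => s' le_s's; apply: eq_ab; exact: leq_trans le_s's le_st.
Qed.

Lemma sys_x_Fop (R : realType) n m (f : 'cV[R]_n -> 'cV[R]_m -> 'cV[R]_n) w u t :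
  sys_x f w u t = Fop f (sys_x f w u) u t + w t.
Proof. by case: t => [|t] //=; rewrite add0r. Qed.

Lemma closed_loopP (R : realType) n m (f : 'cV[R]_n -> 'cV[R]_m -> 'cV[R]_n)
    (Rop : seqv R n -> seqv R m) w x u :
  closed_loop f Rop w x u <-> (x = sys_x f w (Rop w) /\ u = Rop w).
Proof.
have innovation x' u' : (forall t, x' t = Fop f x' u' t + w t) ->
    (fun t => x' t - Fop f x' u' t) = w.
  by move=> Hx; apply/funext => t; rewrite Hx addrAC subrr add0r.
split.
  move=> [Hx Hu]; rewrite innovation // in Hu; subst u; split => //.
  apply/funext; elim=> [|t IH]; first by rewrite Hx add0r.
  by rewrite Hx /= IH.
move=> [-> ->]; split; first exact: sys_x_Fop.
by rewrite innovation //; exact: sys_x_Fop.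
Qed.

Theorem proposition1
  (R : realType) (N n m : nat) (q r : 'I_N -> nat)
  (f : 'cV[R]_n -> 'cV[R]_m -> 'cV[R]_n)
  (Xi : 'I_N -> Type)
  (rho : forall i, Xi i -> 'cV[R]_(q i) -> Xi i)
  (chi : forall i, Xi i -> 'cV[R]_(q i) -> 'cV[R]_(r i))
  (xi0 : forall i, Xi i)
  (gam : 'I_N -> R) (V : forall i, Xi i -> R)
  (Mvz : 'M[R]_(\sum_i q i, \sum_i r i)) (Mvw : 'M[R]_(\sum_i q i, n))
  (Muz : 'M[R]_(m, \sum_i r i))
  (Rop : seqv R n -> seqv R m)
  (gR : R) (alpha : 'I_N -> R)
  (* Assumption 1: (w,u) |-> x is L2-stable *)
  (HA1 : L2stable2 (sys_x f))
  (* each sub-operator has L2-gain at most gam i > 0 (dissipativity) *)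
  (Hgam : forall i, 0 < gam i)
  (HVnn : forall i (xi : Xi i), 0 <= V i xi)
  (Hdiss : forall i (vi : seqv R (q i)) (t : nat),
      V i (traj (@rho i) (xi0 i) vi t.+1) - V i (traj (@rho i) (xi0 i) vi t)
      <= supply (gam i) (vi t) (@chi i (traj (@rho i) (xi0 i) vi t) (vi t)))
  (* well-posedness of the interconnection defining the causal operator Rop *)
  (Hex : forall what : seqv R n, exists v, ctrl_eq rho chi xi0 Mvz Mvw what v)
  (Huniq : forall (what : seqv R n) v v',
      ctrl_eq rho chi xi0 Mvz Mvw what v -> ctrl_eq rho chi xi0 Mvz Mvw what v' -> v = v')
  (HR : forall (what : seqv R n) v,
      ctrl_eq rho chi xi0 Mvz Mvw what v -> Rop what = ctrl_out rho chi xi0 Muz v)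
  (HRc : causal Rop)
  (* the LMI condition *)
  (HgR : 0 < gR) (Halpha : forall i, 0 <= alpha i)
  (HLMI : LMI alpha gam gR Mvz Mvw Muz) :
  L2stable Rop /\
  exists (CLx : seqv R n -> seqv R n) (CLu : seqv R n -> seqv R m),
    L2stable CLx /\ L2stable CLu /\
    forall w x u, closed_loop f Rop w x u <-> (x = CLx w /\ u = CLu w).
Proof.
have Rop_L2 : L2stable Rop := ctrl_L2stable HVnn Hdiss Halpha HLMI Hex HR HRc.
split => //; exists (fun w => sys_x f w (Rop w)), Rop.
split; first exact: L2stable2_comp.
by split => // w x u; exact: closed_loopP.
Qed.
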